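(* Let $x$ be a point of a topological space $X$. Then: (i) $X$ has a countable $cn$-network at $x$ if and only if there exist $\mathbf{M}_x\subseteq\mathbb{N}^\mathbb{N}$ and an $\mathbf{M}_x$-decreasing base $\mathcal{U}(x)=\{U_\alpha:\alpha\in\mathbf{M}_x\}$ of neighborhoods at $x$ satisfying the condition $(\mathbf{D})$; in that case the family $\mathcal{D}_{\mathcal{U}(x)}$ is a countable $cn$-network at $x$. (ii) $X$ has a countable $ck$-network at $x$ if and only if there exist $\mathbf{M}_x\subseteq\mathbb{N}^\mathbb{N}$ and an $\mathbf{M}_x$-decreasing base $\mathcal{U}(x)=\{U_\alpha:\alpha\in\mathbf{M}_x\}$ at $x$ satisfying $(\mathbf{D})$ such that $\mathcal{D}_{\mathcal{U}(x)}$ is a countable $ck$-network at $x$. (iii) $X$ has a countable $cp$-network at $x$ if and only if there exist $\mathbf{M}_x\subseteq\mathbb{N}^\mathbb{N}$ and an $\mathbf{M}_x$-decreasing base $\mathcal{U}(x)=\{U_\alpha:\alpha\in\mathbf{M}_x\}$ at $x$ satisfying $(\mathbf{D})$ such that $\mathcal{D}_{\mathcal{U}(x)}$ is a countable $cp$-network at $x$.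
   Context: $\mathbb{N}^\mathbb{N}$ carries the partial order $\alpha\le\beta$ iff $\alpha_i\le\beta_i$ for all $i$. For a subset $I$ of a partially ordered set, a family $\{A_i\}_{i\in I}$ of sets is $I$-decreasing if $A_j\subseteq A_i$ whenever $i\le j$ in $I$. For $\alpha\in\mathbb{N}^\mathbb{N}$ and $k\in\mathbb{N}$ let $I_k(\alpha)=\{\beta\in\mathbb{N}^\mathbb{N}:\beta_i=\alpha_i \text{ for } i=1,\dots,k\}$. For $\mathbf{M}\subseteq\mathbb{N}^\mathbb{N}$ and an $\mathbf{M}$-decreasing family $\mathcal{U}=\{U_\alpha:\alpha\in\mathbf{M}\}$ of subsets of a set, define $D_k(\alpha)=\bigcap_{\beta\in I_k(\alpha)\cap\mathbf{M}}U_\beta$ and $\mathcal{D}_\mathcal{U}=\{D_k(\alpha):\alpha\in\mathbf{M},k\in\mathbb{N}\}$ (a countable family). $\mathcal{U}$ satisfies condition $(\mathbf{D})$ if $U_\alpha=\bigcup_{k\in\mathbb{N}}D_k(\alpha)$ for every $\alpha\in\mathbf{M}$. For $x\in X$, a family $\mathcal{N}$ of subsets of $X$ is: a $cn$-network at $x$ if for each neighborhood $O_x$ of $x$ the set $\bigcup\{N\in\mathcal{N}:x\in N\subseteq O_x\}$ is a neighborhood of $x$; a $ck$-network at $x$ if for every neighborhood $O_x$ there is a neighborhood $U_x$ of $x$ such that for each compact $K\subseteq U_x$ there is a finite $\mathcal{F}\subseteq\mathcal{N}$ with $x\in\bigcap\mathcal{F}$ and $K\subseteq\bigcup\mathcal{F}\subseteq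 O_x$; a $cp$-network at $x$ if for every neighborhood $O_x$ there is $N\in\mathcal{N}$ with $x\in N\subseteq O_x$, and for every $A\subseteq X$ with $x\in\overline{A}\setminus A$ and every neighborhood $O_x$ there is $N\in\mathcal{N}$ with $x\in N\subseteq O_x$ and $N\cap A$ infinite. *)

From Stdlib Require Import List.
Set Implicit Arguments.

Definition set (X : Type) := X -> Prop.
Definition subset {X : Type} (A B : set X) : Prop := forall y, A y -> B y.

Record topology (X : Type) : Type := Topology {
  is_open : set X -> Prop;
  open_full : is_open (fun _ => True);
  open_inter : forall A B, is_open A -> is_open B -> is_open (fun y => A y /\ B y);
  open_union : forall F : set X -> Prop, (forall A, F A -> is_open A) ->
                 is_open (fun y => exists A, F A /\ A y)
}.

Section Topo.
Context {X : Type} (T : topology X).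

Definition nbhd (x : X) (N : set X) : Prop :=
  exists U, is_open T U /\ U x /\ subset U N.

Definition closure (A : set X) : set X :=
  fun x => forall N, nbhd x N -> exists y, N y /\ A y.

Definition compact (K : set X) : Prop :=
  forall F : set X -> Prop, (forall A, F A -> is_open T A) ->
    (forall y, K y -> exists A, F A /\ A y) ->
    exists l : list (set X), (forall A, In A l -> F A) /\
      (forall y, K y -> exists A, In A l /\ A y).

Definition countable_family (fam : set X -> Prop) : Prop :=
  exists f : nat -> set X, forall A, fam A -> exists n, f n = A.

Definition finite_set (S : set X) : Prop :=
  exists l : list X, forall y, S y -> In y l.

Definition cn_network (x : X) (fam : set X -> Prop) : Prop :=
  forall O, nbhd x O ->
    nbhd x (fun y => exists N, fam N /\ N x /\ subset N O /\ N y).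

Definition ck_network (x : X) (fam : set X -> Prop) : Prop :=
  forall O, nbhd x O -> exists U, nbhd x U /\
    forall K, subset K U -> compact K ->
      exists F : list (set X), (forall N, In N F -> fam N) /\
        (forall N, In N F -> N x) /\
        subset K (fun y => exists N, In N F /\ N y) /\
        subset (fun y => exists N, In N F /\ N y) O.

Definition cp_network (x : X) (fam : set X -> Prop) : Prop :=
  (forall O, nbhd x O -> exists N, fam N /\ N x /\ subset N O) /\
  (forall (A : set X) O, closure A x -> ~ A x -> nbhd x O ->
     exists N, fam N /\ N x /\ subset N O /\
       ~ finite_set (fun y => N y /\ A y)).

End Topo.

(* N^N with the pointwise order. Coordinates alpha_1, alpha_2, ... of the
   paper are alpha 0, alpha 1, ... here. *)
Definition baire := nat -> nat.
Definition ble (a b : baire) : Prop := forall i, a i <= b i.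

Definition decreasing_family {X : Type} (M : baire -> Prop) (U : baire -> set X) :=
  forall a b, M a -> M b -> ble a b -> subset (U b) (U a).

Definition Ik (k : nat) (a : baire) : baire -> Prop :=
  fun b => forall i, i < k -> b i = a i.

Definition Dk {X : Type} (M : baire -> Prop) (U : baire -> set X)
  (k : nat) (a : baire) : set X :=
  fun y => forall b, Ik k a b -> M b -> U b y.

(* D_U = {D_k(alpha) : alpha in M, k in N}, N = {1,2,...} *)
Definition D_family {X : Type} (M : baire -> Prop) (U : baire -> set X) :
  set X -> Prop :=
  fun A => exists a k, M a /\ 1 <= k /\ A = Dk M U k a.

Definition condition_D {X : Type} (M : baire -> Prop) (U : baire -> set X) :=
  forall a, M a -> forall y, U a y <-> exists k, 1 <= k /\ Dk M U k a y.

Definition nbhd_base_at {X : Type} (T : topology X) (x : X)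
  (M : baire -> Prop) (U : baire -> set X) :=
  (forall a, M a -> nbhd T x (U a)) /\
  (forall O, nbhd T x O -> exists a, M a /\ subset (U a) O).

Definition good_base {X : Type} (T : topology X) (x : X)
  (M : baire -> Prop) (U : baire -> set X) :=
  decreasing_family M U /\ nbhd_base_at T x M U /\ condition_D M U.

(* Every family D_U is countable, since D_k(alpha) only depends on the first k
   coordinates of alpha; and condition (D) for a base U makes D_U a
   cn-network. Conversely, enumerate a countable cn-network as f 0, f 1, ...
   and code a set O by the 0/1 sequence vanishing exactly at the indices i
   with x in f i, f i contained in O. Put U_alpha := union of the f i with
   alpha_i = 0 (and x in f i), indexed by the alpha for which this is a
   neighbourhood of x. Then D_k(code O) lies in O and contains every f i with
   i < k that is good for O, so it replaces any finite subfamily of the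
   network below O; ck- and cp-networks are cn-networks, hence (ii), (iii). *)

From Stdlib Require Import List Lia.
From Stdlib Require Import Classical ClassicalEpsilon FunctionalExtensionality PropExtensionality.
From mathcomp Require Import choice.

Section Neighbourhoods.
Context {X : Type} (T : topology X) (x : X).

Lemma nbhd_mono (A B : set X) : nbhd T x A -> subset A B -> nbhd T x B.
Proof.
  intros [V [HV [HVx HVA]]] HAB.
  exists V. repeat split; auto.
  intros y Hy. apply HAB, HVA, Hy.
Qed.

Lemma nbhd_point (A : set X) : nbhd T x A -> A x.
Proof. intros [V [_ [HVx HVA]]]. apply HVA, HVx. Qed.

End Neighbourhoods.

Section DFamily.
Context {X : Type} (M : baire -> Prop) (U : baire -> set X).

Lemma Dk_sub (k : nat) (a : baire) : M a -> subset (Dk M U k a) (U a).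
Proof. intros Ma y Hy. apply Hy; [intros i _; reflexivity | exact Ma]. Qed.

Lemma Dk_point (x : X) (k : nat) (a : baire) :
  (forall b, M b -> U b x) -> Dk M U k a x.
Proof. intros H b _ Mb. apply H, Mb. Qed.

Lemma Dk_prefix (k : nat) (a b : baire) :
  (forall i, i < k -> a i = b i) -> Dk M U k a = Dk M U k b.
Proof.
  intros Hab. apply functional_extensionality; intro y.
  apply propositional_extensionality.
  split; intros H c Hc Mc; apply H; auto; intros i Hi; rewrite Hc by exact Hi.
  - symmetry; apply Hab, Hi.
  - apply Hab, Hi.
Qed.

Definition baire_of_list (l : list nat) : baire := fun i => nth i l 0.

Lemma baire_of_list_prefix (a : baire) (k i : nat) :
  i < k -> baire_of_list (map a (seq 0 k)) i = a i.
Proof.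
  intros Hi. unfold baire_of_list.
  rewrite (nth_indep _ _ (a 0)) by (rewrite length_map, length_seq; exact Hi).
  rewrite map_nth, seq_nth by exact Hi. reflexivity.
Qed.

Lemma D_family_countable : countable_family (D_family M U).
Proof.
  exists (fun n => match @unpickle (nat * list nat)%type n with
                   | Some (k, l) => Dk M U k (baire_of_list l)
                   | None => fun _ => False end).
  intros A [a [k [_ [_ ->]]]].
  exists (pickle (k, map a (seq 0 k))). rewrite pickleK.
  apply Dk_prefix. intros i Hi. apply baire_of_list_prefix, Hi.
Qed.

Lemma good_base_cn_network {T : topology X} (x : X) :
  good_base T x M U -> cn_network T x (D_family M U).
Proof.
  intros [_ [[Hnbhd Hbase] HD]] O HO.
  destruct (Hbase O HO) as [a [Ma HaO]].
  apply (nbhd_mono T x (U a)); [apply Hnbhd, Ma |].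
  intros y Hy. destruct (proj1 (HD a Ma y) Hy) as [k [Hk Hky]].
  exists (Dk M U k a). repeat split; auto.
  - exists a, k. auto.
  - apply Dk_point. intros b Mb. apply nbhd_point with T, Hnbhd, Mb.
  - intros z Hz. apply HaO, (Dk_sub k a Ma), Hz.
Qed.

End DFamily.

Section NetworkKinds.
Context {X : Type} (T : topology X) (x : X) (fam : set X -> Prop).

Lemma ck_network_cn_network : ck_network T x fam -> cn_network T x fam.
Proof.
  intros Hck O HO. destruct (Hck O HO) as [V [HV HK]].
  apply (nbhd_mono T x V); [exact HV |]. intros y Hy.
  destruct (HK (fun z => z = y)) as [F [HFfam [HFx [HKF HFO]]]].
  - intros z ->. exact Hy.
  - intros G _ HG. destruct (HG y eq_refl) as [A [HA HAy]].
    exists (A :: nil). split.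
    + intros B [<- | []]. exact HA.
    + intros z ->. exists A. split; [left; reflexivity | exact HAy].
  - destruct (HKF y eq_refl) as [N [HN HNy]].
    exists N. split; [apply HFfam, HN |]. split; [apply HFx, HN |].
    split; [| exact HNy]. intros z Hz. apply HFO. exists N. auto.
Qed.

(* If the union S of the members below O were no neighbourhood of x, then x
   would lie in the closure of the complement of S, and the cp-condition would
   produce a member below O meeting that complement. *)
Lemma cp_network_cn_network : cp_network T x fam -> cn_network T x fam.
Proof.
  intros [Hbase Hacc] O HO.
  set (S := fun y => exists N, fam N /\ N x /\ subset N O /\ N y).
  apply NNPP. intros HS.
  assert (Hcl : closure T (fun y => ~ S y) x).
  { intros N HN. apply NNPP. intros Hno. apply HS, (nbhd_mono T x N); [exact HN |].
    intros y Hy. apply NNPP. intros HSy. apply Hno. exists y. auto. }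
  assert (HSx : ~ ~ S x).
  { intros HSx. apply HSx. destruct (Hbase O HO) as [N [? [? ?]]].
    exists N. auto. }
  destruct (Hacc _ O Hcl HSx HO) as [N [HN [HNx [HNO Hinf]]]].
  apply Hinf. exists nil. intros y [HNy HSy]. apply HSy. exists N. auto.
Qed.

End NetworkKinds.

Section BaseFromNetwork.
Context {X : Type} (T : topology X) (x : X) (fam : set X -> Prop).
Variable f : nat -> set X.
Hypothesis f_onto : forall A, fam A -> exists n, f n = A.

Definition good_for (O : set X) (i : nat) : Prop :=
  fam (f i) /\ f i x /\ subset (f i) O.

Definition code (O : set X) : baire :=
  fun i => if excluded_middle_informative (good_for O i) then 0 else 1.

Definition Unet (a : baire) : set X :=
  fun y => exists i, a i = 0 /\ fam (f i) /\ f i x /\ f i y.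

Definition Mnet (a : baire) : Prop := nbhd T x (Unet a).

Definition Dnet (O : set X) (k : nat) : set X := Dk Mnet Unet k (code O).

Lemma code_eq0 (O : set X) (i : nat) : code O i = 0 <-> good_for O i.
Proof.
  unfold code. destruct (excluded_middle_informative (good_for O i)).
  - tauto.
  - split; [discriminate | contradiction].
Qed.

Lemma Unet_code_sub (O : set X) : subset (Unet (code O)) O.
Proof.
  intros y [i [Hi [_ [_ Hy]]]].
  apply code_eq0 in Hi. apply Hi, Hy.
Qed.

Lemma good_sub_Dnet (O : set X) (k i : nat) :
  i < k -> good_for O i -> subset (f i) (Dnet O k).
Proof.
  intros Hik Hgood y Hy b Hb _. exists i.
  rewrite Hb by exact Hik. split; [apply code_eq0, Hgood |].
  destruct Hgood as [? [? _]]. auto.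
Qed.

Lemma Dnet_point (O : set X) (k : nat) : Dnet O k x.
Proof. apply Dk_point. intros b Mb. apply nbhd_point with T, Mb. Qed.

Hypothesis fam_cn : cn_network T x fam.

Lemma Mnet_code (O : set X) : nbhd T x O -> Mnet (code O).
Proof.
  intros HO. apply (nbhd_mono T x _ _ (fam_cn O HO)).
  intros y [N [HN [HNx [HNO HNy]]]]. destruct (f_onto N HN) as [n <-].
  exists n. repeat split; auto. apply code_eq0. repeat split; auto.
Qed.

Lemma Dnet_sub (O : set X) (k : nat) : nbhd T x O -> subset (Dnet O k) O.
Proof.
  intros HO y Hy. apply Unet_code_sub, (Dk_sub Mnet Unet k _ (Mnet_code O HO)), Hy.
Qed.

Lemma Dnet_D_family (O : set X) (k : nat) :
  nbhd T x O -> 1 <= k -> D_family Mnet Unet (Dnet O k).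
Proof. intros HO Hk. exists (code O), k. auto using Mnet_code. Qed.

(* y in U_alpha through f i already lies in D_{i+1}(alpha). *)
Lemma good_base_net : good_base T x Mnet Unet.
Proof.
  split; [| split; [split |]].
  - intros a b _ _ Hab y [i [Hi Hy]]. exists i. split; [| exact Hy].
    specialize (Hab i). lia.
  - intros a Ma. exact Ma.
  - intros O HO. exists (code O). split; [apply Mnet_code, HO | apply Unet_code_sub].
  - intros a Ma y. split.
    + intros [i [Hi Hy]]. exists (S i). split; [lia |].
      intros b Hb _. exists i. rewrite Hb by lia. auto.
    + intros [k [_ Hk]]. apply (Dk_sub Mnet Unet k a Ma), Hk.
Qed.

Lemma list_index_bound (F : list (set X)) :
  (forall N, In N F -> fam N) ->
  exists k, forall N, In N F -> exists i, i < k /\ f i = N.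
Proof.
  induction F as [| A F IH]; intros HF.
  - exists 0. intros N [].
  - destruct IH as [k Hk]; [intros N HN; apply HF; right; exact HN |].
    destruct (f_onto A) as [n Hn]; [apply HF; left; reflexivity |].
    exists (S (max n k)). intros N [<- | HN].
    + exists n. split; [lia | exact Hn].
    + destruct (Hk N HN) as [i [Hi HiN]]. exists i. split; [lia | exact HiN].
Qed.

(* A single member D_k(code O) covers the whole finite subfamily F. *)
Lemma net_ck_network : ck_network T x fam -> ck_network T x (D_family Mnet Unet).
Proof.
  intros Hck O HO. destruct (Hck O HO) as [V [HV HK]].
  exists V. split; [exact HV |]. intros K HKV HKc.
  destruct (HK K HKV HKc) as [F [HFfam [HFx [HKF HFO]]]].
  destruct (list_index_bound F HFfam) as [k Hk].
  exists (Dnet O (S k) :: nil). repeat split.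
  - intros N [<- | []]. apply Dnet_D_family; [exact HO | lia].
  - intros N [<- | []]. apply Dnet_point.
  - intros y Hy. destruct (HKF y Hy) as [N [HN HNy]].
    destruct (Hk N HN) as [i [Hi <-]].
    exists (Dnet O (S k)). split; [left; reflexivity |].
    assert (Hgood : good_for O i).
    { split; [apply HFfam, HN |]. split; [apply HFx, HN |].
      intros z Hz. apply HFO. exists (f i). auto. }
    refine (good_sub_Dnet O (S k) i _ Hgood y HNy). lia.
  - intros y [N [[<- | []] HNy]]. apply (Dnet_sub O (S k) HO), HNy.
Qed.

Lemma net_cp_network : cp_network T x fam -> cp_network T x (D_family Mnet Unet).
Proof.
  intros [_ Hacc]. split.
  - intros O HO. exists (Dnet O 1).
    split; [apply Dnet_D_family; [exact HO | lia] |].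
    split; [apply Dnet_point | apply Dnet_sub, HO].
  - intros A O Hcl HAx HO. destruct (Hacc A O Hcl HAx HO) as [N [HN [HNx [HNO Hinf]]]].
    destruct (f_onto N HN) as [i <-].
    exists (Dnet O (S i)).
    split; [apply Dnet_D_family; [exact HO | lia] |].
    split; [apply Dnet_point |]. split; [apply Dnet_sub, HO |].
    intros [l Hl]. apply Hinf. exists l. intros y [Hy HAy]. apply Hl.
    split; [| exact HAy].
    refine (good_sub_Dnet O (S i) i _ _ y Hy); [lia | repeat split; auto].
Qed.

End BaseFromNetwork.

Theorem mainTheorem3 (X : Type) (T : topology X) (x : X) :
  ( ((exists fam, countable_family fam /\ cn_network T x fam) <->
      (exists M U, good_base T x M U)) /\
    (forall M U, good_base T x M U ->
       countable_family (D_family M U) /\ cn_network T x (D_family M U)) ) /\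
  ((exists fam, countable_family fam /\ ck_network T x fam) <->
     (exists M U, good_base T x M U /\
        countable_family (D_family M U) /\ ck_network T x (D_family M U))) /\
  ((exists fam, countable_family fam /\ cp_network T x fam) <->
     (exists M U, good_base T x M U /\
        countable_family (D_family M U) /\ cp_network T x (D_family M U))).
Proof.
  split; [split; [split |] | split; split].
  - intros [fam [[f Hf] Hcn]]. exists (Mnet T x fam f), (Unet x fam f).
    apply good_base_net; assumption.
  - intros [M [U HG]]. exists (D_family M U).
    split; [apply D_family_countable | apply good_base_cn_network, HG].
  - intros M U HG. split; [apply D_family_countable | apply good_base_cn_network, HG].
  - intros [fam [[f Hf] Hck]]. pose proof (ck_network_cn_network T x fam Hck) as Hcn.
    exists (Mnet T x fam f), (Unet x fam f).
    split; [apply good_base_net; assumption |].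
    split; [apply D_family_countable | apply net_ck_network; assumption].
  - intros [M [U [_ HD]]]. exists (D_family M U). exact HD.
  - intros [fam [[f Hf] Hcp]]. pose proof (cp_network_cn_network T x fam Hcp) as Hcn.
    exists (Mnet T x fam f), (Unet x fam f).
    split; [apply good_base_net; assumption |].
    split; [apply D_family_countable | apply net_cp_network; assumption].
  - intros [M [U [_ HD]]]. exists (D_family M U). exact HD.
Qed.
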